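(* Henson's graph $U_3$ satisfies property $\mathscr{D}_3$ but does not satisfy property $\mathscr{D}_4$.
   Context: Henson's graph $U_3$ is the countable triangle-free graph (unique up to isomorphism) with the extension property: for all disjoint finite sets $A,B\subseteq V(U_3)$ with $A$ independent there is a vertex $v\notin A\cup B$ adjacent to every vertex of $A$ and to no vertex of $B$. Property $\mathscr{D}_k$: for every $m\in\{1,\dots,k\}$ and every sequence $x_1,\dots,x_{3m}$ of (not necessarily distinct) vertices there is a vertex $y$ with $|\{i\in[3m]: x_iy\in E(G)\}|\ge m+1$. *)

From mathcomp Require Import all_boot.
Set Implicit Arguments. Unset Strict Implicit. Unset Printing Implicit Defensive.

Definition simple_graph (V : eqType) (E : rel V) : Prop :=
  (forall x y, E x y = E y x) /\ (forall x, ~~ E x x).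

Definition triangle_free (V : eqType) (E : rel V) : Prop :=
  forall x y z, ~ [&& E x y, E y z & E x z].

Definition independent (V : eqType) (E : rel V) (A : seq V) : Prop :=
  forall a b, a \in A -> b \in A -> ~~ E a b.

Definition henson3_extension (V : eqType) (E : rel V) : Prop :=
  forall A B : seq V,
    (forall x, x \in A -> x \notin B) -> independent E A ->
    exists v, [/\ v \notin A, v \notin B,
                  (forall a, a \in A -> E a v) &
                  (forall b, b \in B -> ~~ E b v)].

(* G is (a copy of) Henson's graph U_3: countable, simple, triangle-free,
   with the extension property (unique up to isomorphism). *)
Definition is_henson_U3 (V : countType) (E : rel V) : Prop :=
  [/\ simple_graph E, triangle_free E & henson3_extension E].

Definition prop_D (V : eqType) (E : rel V) (k : nat) : Prop :=
  forall m, 1 <= m <= k ->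
    forall x : 'I_(3 * m) -> V,
      exists y : V, m.+1 <= #|[pred i : 'I_(3 * m) | E (x i) y]|.

From mathcomp Require Import all_boot zify.
Set Implicit Arguments. Unset Strict Implicit. Unset Printing Implicit Defensive.

(* For m <= 3 the graph induced on the 3m indices is triangle-free, so the
   Ramsey bounds R(3,2) = 3, R(3,3) = 6 and R(3,4) = 9 give it an independent
   set of m+1 indices, and the extension property of U_3 supplies a common
   neighbour of their images.  For m = 4, U_3 contains every finite
   triangle-free graph as an induced subgraph, in particular 12 vertices of
   the circulant graph C_13(1,5), whose independent sets have at most 4
   vertices; as U_3 is triangle-free, the neighbours of any vertex among
   these 12 form an independent set, so there are at most 4 of them. *)

Definition independent_set (T : finType) (e : rel T) (S : {set T}) : bool :=
  [forall i in S, forall j in S, ~~ e i j].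

Lemma independent_setP (T : finType) (e : rel T) (S : {set T}) :
  reflect {in S &, forall i j, ~~ e i j} (independent_set e S).
Proof.
apply: (iffP forall_inP) => [h i j iS jS | h i iS].
  exact: (forall_inP (h i iS)).
by apply/forall_inP => j jS; apply: h.
Qed.

Lemma independent_setS (T : finType) (e : rel T) (S S' : {set T}) :
  S' \subset S -> independent_set e S -> independent_set e S'.
Proof.
move=> /subsetP sS' /independent_setP hS; apply/independent_setP => i j iS jS.
by apply: hS; apply: sS'.
Qed.

Definition neighbours (T : finType) (e : rel T) (v : T) : {set T} := [set u | e v u].

Section Handshake.
Variables (T : finType) (e : rel T).
Hypothesis e_simple : simple_graph e.

Lemma sum_card_neighbours_even : ~~ odd (\sum_i #|neighbours e i|).
Proof.
have [e_sym e_irr] := e_simple.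
pose r (i : T) := val (enum_rank i).
pose lt_pair (p : T * T) := r p.1 < r p.2.
have -> : \sum_i #|neighbours e i| = \sum_(p : T * T) e p.1 p.2.
  rewrite -(pair_bigA _ (fun i j => nat_of_bool (e i j))); apply: eq_bigr => i _.
  by rewrite -sum1_card big_mkcond /=; apply: eq_bigr => j _; rewrite inE; case: (e i j).
rewrite (bigID lt_pair) /=.
have -> : \sum_(p | ~~ lt_pair p) e p.1 p.2 = \sum_(p | lt_pair p) e p.1 p.2.
  rewrite (reindex_inj (h := fun p : T * T => (p.2, p.1))) /=; last first.
    by move=> [a b] [c d] [-> ->].
  rewrite big_mkcond [RHS]big_mkcond /=.
  apply: eq_bigr => -[a b] _ /=; rewrite /lt_pair /= e_sym.
  have [ab|ba|ab] := ltngtP (r a) (r b); rewrite ?ab ?ba //=.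
  have -> : a = b by apply/enum_rank_inj/val_inj.
  by rewrite (negbTE (e_irr b)).
by rewrite addnn odd_double.
Qed.
End Handshake.

Section TriangleFreeIndependence.
Variables (T : finType) (e : rel T).
Hypotheses (e_simple : simple_graph e) (e_tf : triangle_free e).

Lemma independent_set0 : independent_set e set0.
Proof. by apply/independent_setP => i j; rewrite inE. Qed.

Lemma independent_set_neighbours v : independent_set e (neighbours e v).
Proof.
apply/independent_setP => a b; rewrite !inE => va vb; apply/negP => ab.
by apply: (@e_tf v a b); rewrite va ab vb.
Qed.

Lemma independent_setU1 v S : independent_set e S ->
  [disjoint S & neighbours e v] -> independent_set e (v |: S).
Proof.
have [e_sym e_irr] := e_simple.
move=> /independent_setP iS dS; apply/independent_setP.
have vS u : u \in S -> ~~ e v u by move=> /(disjointFr dS); rewrite inE => ->.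
move=> a b; rewrite !inE => /predU1P[-> | aS] /predU1P[-> | bS].
- exact: e_irr.
- exact: vS.
- by rewrite e_sym; apply: vS.
- exact: iS.
Qed.

(* The classical bound R(3, k+1) <= C(k+2, 2): either a vertex has k+1
   neighbours, which are independent, or removing it with its neighbours
   leaves at least C(k+1, 2) vertices. *)
Lemma triangle_free_independent_set k (X : {set T}) : 'C(k.+1, 2) <= #|X| ->
  exists S : {set T}, [/\ S \subset X, independent_set e S & k <= #|S|].
Proof.
elim: k X => [|k IH] X hX; first by exists set0; rewrite sub0set independent_set0.
have /set0Pn [v vX] : X != set0 by rewrite -card_gt0; move: hX; rewrite binS bin1; lia.
set N := X :&: neighbours e v.
have [kN | Nk] := leqP k.+1 #|N|.
  exists N; split => //; first exact: subsetIl.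
  exact: independent_setS (subsetIr _ _) (independent_set_neighbours v).
set W := X :\: (v |: neighbours e v).
have hW : 'C(k.+1, 2) <= #|W|.
  have XvN : X :&: (v |: neighbours e v) = v |: N by rewrite setIUr (setIidPr _) ?sub1set.
  have := cardsID (v |: neighbours e v) X; rewrite XvN cardsU1.
  by move: hX Nk; rewrite binS bin1 -/W; lia.
have [S [sSW iS kS]] := IH W hW.
have vS : v \notin S by apply/negP => /(subsetP sSW); rewrite !inE eqxx.
exists (v |: S); split; last by rewrite cardsU1 vS.
- by rewrite subUset sub1set vX (subset_trans sSW) ?subsetDl.
- apply: independent_setU1 => //; rewrite disjoint_subset.
  by apply: subset_trans sSW _; apply/subsetP => u; rewrite !inE negb_or => /andP[/andP[]].
Qed.

(* R(3, 4) <= 9.  With exactly nine vertices and every degree equal to 3 the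
   degree sum would be odd; otherwise a neighbourhood of size 4 is
   independent, or a vertex of degree at most 2 has 6 non-neighbours. *)
Lemma triangle_free_independent_set4 : 9 <= #|T| ->
  exists S : {set T}, independent_set e S /\ 4 <= #|S|.
Proof.
move=> hT; have [hT10 | hT9] := leqP 10 #|T|.
  have [|S [_ iS kS]] := @triangle_free_independent_set 4 setT; first by rewrite cardsT.
  by exists S.
case: (boolP [exists v, 4 <= #|neighbours e v|]) => [/existsP[v dv] | /existsPn dle3].
  by exists (neighbours e v); rewrite independent_set_neighbours.
case: (boolP [exists v, #|neighbours e v| <= 2]) => [/existsP[v dv] | /existsPn dge3].
  have hX : 'C(4, 2) <= #|~: (v |: neighbours e v)|.
    have := cardsC (v |: neighbours e v); rewrite cardsU1.
    by have := leq_b1 (v \notin neighbours e v); move: dv hT9; rewrite (_ : 'C(4, 2) = 6) //; lia.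
  have [S [sSX iS kS]] := triangle_free_independent_set hX.
  have vS : v \notin S by apply/negP => /(subsetP sSX); rewrite !inE eqxx.
  exists (v |: S); split; last by rewrite cardsU1 vS.
  apply: independent_setU1 => //; rewrite disjoint_subset.
  by apply: subset_trans sSX _; apply/subsetP => u; rewrite !inE negb_or => /andP[].
have deg3 v : #|neighbours e v| = 3 by move: (dle3 v) (dge3 v); lia.
have := sum_card_neighbours_even e_simple.
have T9 : #|T| = 9 by lia.
by rewrite (eq_bigr (fun _ => 3)) // sum_nat_const [#|_|]T9.
Qed.

Lemma triangle_free_independent_set_3m m : 1 <= m <= 3 -> 3 * m <= #|T| ->
  exists S : {set T}, independent_set e S /\ m.+1 <= #|S|.
Proof.
case: m => [|[|[|[|]]]] // _ hT; last exact: triangle_free_independent_set4.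
- have [|S [_ iS kS]] := @triangle_free_independent_set 2 setT; first by rewrite cardsT.
  by exists S.
- have [|S [_ iS kS]] := @triangle_free_independent_set 3 setT; first by rewrite cardsT.
  by exists S.
Qed.
End TriangleFreeIndependence.

Section IndependenceBound.
Variables (T : finType) (e : rel T).

(* Branch on the first candidate: either it is left out, or it is kept and
   its neighbours are discarded.  The fuel [n] only bounds the recursion. *)
Fixpoint independence_bound (n : nat) (s : seq T) : nat :=
  match n, s with
  | n'.+1, v :: s' =>
      maxn (independence_bound n' s') (independence_bound n' [seq u <- s' | ~~ e v u]).+1
  | _, _ => size s
  end.

Lemma independent_set_card_le_bound n s (S : {set T}) :
  {subset S <= s} -> independent_set e S -> #|S| <= independence_bound n s.
Proof.
elim: n s S => [|n IH] s S sS iS.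
  by apply: leq_trans (card_size s); apply/subset_leq_card/subsetP.
case: s sS => [|v s] sS /=.
  by apply: leq_trans (card_size [::]); apply/subset_leq_card/subsetP.
have [vS | vNS] := boolP (v \in S); last first.
  apply: leq_trans (leq_maxl _ _); apply: IH iS => u uS.
  by move: (sS u uS); rewrite inE => /predU1P[eq_uv | //]; rewrite -eq_uv uS in vNS.
apply: leq_trans (leq_maxr _ _); rewrite (cardsD1 v S) vS ltnS.
apply: IH (independent_setS (subsetDl _ _) iS) => u; rewrite !inE => /andP[neq_uv uS].
rewrite mem_filter (independent_setP _ _ iS v u vS uS).
by move: (sS u uS); rewrite inE (negbTE neq_uv).
Qed.
End IndependenceBound.

(* The circulant graph on Z/13 with connection set {1, 5, 8, 12} = {±1, ±5}
   is the triangle-free graph witnessing R(3, 5) > 13; we keep 12 of its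
   vertices. *)
Definition circulant12 : rel 'I_12 :=
  fun i j => (i + 13 - j) %% 13 \in [:: 1; 5; 8; 12].

(* Unlike [ord_enum], which goes through the opaque [insub], this enumeration
   of ['I_n.+1] evaluates to a concrete list under [vm_compute]. *)
Definition ord_seq n : seq 'I_n.+1 :=
  [seq Ordinal (ltn_pmod k (ltn0Sn n)) | k <- iota 0 n.+1].

Lemma mem_ord_seq n (i : 'I_n.+1) : i \in ord_seq n.
Proof.
apply/mapP; exists (val i); first by rewrite mem_iota ltn_ord.
by apply: val_inj; rewrite /= modn_small.
Qed.

Lemma forall_ord_seq n (P : pred 'I_n.+1) : all P (ord_seq n) -> forall i, P i.
Proof. by move=> /allP hP i; apply/hP/mem_ord_seq. Qed.

Lemma circulant12_simple : simple_graph circulant12.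
Proof.
split=> [i j|]; last by apply: forall_ord_seq; vm_compute.
apply/eqP; move: j; apply: forall_ord_seq; move: i.
apply: (forall_ord_seq (P := fun i => all (fun j => circulant12 i j == circulant12 j i) _)).
by vm_compute.
Qed.

Lemma circulant12_triangle_free : triangle_free circulant12.
Proof.
move=> i j k; apply/negP; move: k; apply: forall_ord_seq; move: j.
apply: (forall_ord_seq (P := fun j => all _ _)); move: i.
by apply: (forall_ord_seq (P := fun i => all (fun j => all _ _) _)); vm_compute.
Qed.

Lemma circulant12_independent_set_card (S : {set 'I_12}) :
  independent_set circulant12 S -> #|S| <= 4.
Proof.
move=> iS; have := independent_set_card_le_bound 12 (fun i _ => mem_ord_seq i) iS.
by rewrite (_ : independence_bound _ _ _ = 4) //; vm_compute.
Qed.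

Section Henson.
Variables (V : eqType) (E : rel V).
Hypotheses (E_simple : simple_graph E) (E_tf : triangle_free E) (E_ext : henson3_extension E).

Lemma simple_graph_relpre (T : eqType) (x : T -> V) : simple_graph (relpre x E).
Proof. by have [E_sym E_irr] := E_simple; split=> [i j | i] /=. Qed.

Lemma triangle_free_relpre (T : eqType) (x : T -> V) : triangle_free (relpre x E).
Proof. by move=> i j k; apply: E_tf. Qed.

Lemma extension_common_neighbour (T : finType) (x : T -> V) (S : {set T}) :
  independent_set (relpre x E) S -> exists y, S \subset [pred i | E (x i) y].
Proof.
move=> /independent_setP iS.
have [|a b /mapP[i iS' ->] /mapP[j jS' ->]|y [_ _ Sy _]] :=
  E_ext (A := [seq x i | i in S]) (B := [::]).
- by move=> a _; rewrite in_nil.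
- by apply: iS; rewrite -mem_enum.
by exists y; apply/subsetP => i iS'; rewrite inE /= Sy // map_f ?mem_enum.
Qed.

Section Embedding.
Variables (T : finType) (e : rel T).
Hypotheses (e_simple : simple_graph e) (e_tf : triangle_free e).

Lemma henson_extend_embedding (f : T -> V) (s : seq T) v :
  {in s &, injective f} -> {in s &, forall i j, E (f i) (f j) = e i j} ->
  exists w, [/\ forall u, u \in s -> w != f u & forall u, u \in s -> E (f u) w = e u v].
Proof.
move=> f_inj fE.
set A := [seq f u | u <- s & e u v]; set B := [seq f u | u <- s & ~~ e u v].
have inA u : u \in s -> e u v -> f u \in A by move=> us uv; rewrite map_f // mem_filter uv.
have inB u : u \in s -> ~~ e u v -> f u \in B by move=> us uv; rewrite map_f // mem_filter uv.
have [|a b|w [wA wB Aw Bw]] := E_ext (A := A) (B := B).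
- move=> a /mapP[u]; rewrite mem_filter => /andP[uv us] ->.
  apply/mapP => -[u']; rewrite mem_filter => /andP[u'v u's] /f_inj eq_uu'.
  by move: u'v; rewrite -eq_uu' // uv.
- move=> /mapP[u]; rewrite mem_filter => /andP[uv us] -> /mapP[u'].
  rewrite mem_filter => /andP[u'v u's] ->; rewrite fE //; apply/negP => uu'.
  by apply: (@e_tf u u' v); rewrite uu' u'v uv.
exists w; split=> u us.
  case: (boolP (e u v)) => uv.
  - by apply: contraNneq wA => ->; apply: inA.
  - by apply: contraNneq wB => ->; apply: inB.
case: (boolP (e u v)) => uv; first exact/Aw/inA.
exact/negbTE/Bw/inB.
Qed.

Lemma henson_embedding_on (s : seq T) : exists f : T -> V,
  {in s &, injective f} /\ {in s &, forall i j, E (f i) (f j) = e i j}.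
Proof.
have [E_sym E_irr] := E_simple; have [e_sym e_irr] := e_simple.
elim: s => [|v s [f [f_inj fE]]].
  have [|//|w _] := E_ext (A := [::]) (B := [::]); first by [].
  by exists (fun=> w); split=> i.
have [w [wf fw]] := henson_extend_embedding v f_inj fE.
have mem_s u : u \in v :: s -> u != v -> u \in s by rewrite inE => /predU1P[->|]; rewrite ?eqxx.
exists (fun i => if i == v then w else f i); split=> i j iS jS.
  case: (eqVneq i v) => [-> | iv]; case: (eqVneq j v) => [-> | jv] //.
  - by move=> eq_wf; move: (wf j (mem_s j jS jv)); rewrite eq_wf eqxx.
  - by move=> eq_fw; move: (wf i (mem_s i iS iv)); rewrite eq_fw eqxx.
  - exact: f_inj (mem_s i iS iv) (mem_s j jS jv).
case: (eqVneq i v) => [-> | iv]; case: (eqVneq j v) => [-> | jv].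
- by rewrite (negbTE (E_irr w)) (negbTE (e_irr v)).
- by rewrite E_sym e_sym fw ?mem_s.
- by rewrite fw ?mem_s.
- by rewrite fE ?mem_s.
Qed.

Lemma henson_embedding : exists f : T -> V,
  injective f /\ forall i j, E (f i) (f j) = e i j.
Proof.
have [f [f_inj fE]] := henson_embedding_on (enum T).
by exists f; split=> [i j | i j]; [apply: f_inj | apply: fE]; rewrite mem_enum.
Qed.
End Embedding.

Lemma henson_D3 : prop_D E 3.
Proof.
move=> m hm x.
have [S [iS kS]] := triangle_free_independent_set_3m (simple_graph_relpre x)
  (triangle_free_relpre (x := x)) hm (eq_leq (esym (card_ord _))).
have [y Sy] := extension_common_neighbour iS.
by exists y; apply: leq_trans kS (subset_leq_card Sy).
Qed.

Lemma henson_not_D4 : ~ prop_D E 4.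
Proof.
move=> D4; have [f [_ fE]] := henson_embedding circulant12_simple circulant12_triangle_free.
have [y] := D4 4 isT f; rewrite -cardsE; apply/negP; rewrite -ltnNge ltnS.
apply: circulant12_independent_set_card; apply/independent_setP => i j; rewrite !inE -fE.
by move=> iy jy; apply/negP => ij; apply: (@E_tf (f i) (f j) y); rewrite ij iy jy.
Qed.
End Henson.

Theorem theorem5p3 (V : countType) (E : rel V) :
  is_henson_U3 E -> prop_D E 3 /\ ~ prop_D E 4.
Proof.
move=> [E_simple E_tf E_ext]; split.
- exact: henson_D3 E_simple E_tf E_ext.
- exact: henson_not_D4 E_tf E_ext.
Qed.
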